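(* Let $n,\nu\in\mathbb{N}$ with $1\le\nu\le n$, and let $0=n_0<n_1<\cdots<n_\nu=n$ be integers. Let $m\ge 1$ and, for each $i\in\{1,\dots,m\}$, let $(r_i,a_i,d_i)$ be integers with $0\le a_i<d_i\le\nu$ and $0<r_i\le n_{d_i}-n_{a_i}$. Let $\bm h=(h_1,\dots,h_n)\in\mathbb{N}^n$ satisfy the block monotonicity condition: for every $\kappa\in\{1,\dots,\nu\}$, $h_i\ge h_j$ whenever $n_{\kappa-1}+1\le i<j\le n_\kappa$. Then $\bm h$ is adequate for the demand $(\bm r,\bm a,\bm d)$ if and only if $W_{k_1k_2\cdots k_\nu}(\bm h,\bm r,\bm a,\bm d)\ge 0$ for every integer tuple $(k_1,\dots,k_\nu)$ with $0\le k_\kappa\le n_\kappa-n_{\kappa-1}$ for all $\kappa$.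
   Context: The time horizon consists of $n$ slots; the integers $0=n_0<n_1<\dots<n_\nu=n$ are the admissible arrival times/deadlines. A load with service $(r,a,d)$ requires one unit of power in exactly $r$ of the slots $n_a+1,\dots,n_d$. The supply $\bm h$ is called adequate for the demand $(\bm r,\bm a,\bm d)=((r_i,a_i,d_i))_{i=1}^m$ if there exists an $m\times n$ matrix $A$ with entries in $\{0,1\}$ such that for all $i$: $\sum_{j=1}^n A(i,j)=r_i$ and $A(i,j)=0$ whenever $j\notin\{n_{a_i}+1,\dots,n_{d_i}\}$; and for all $j$: $\sum_{i=1}^m A(i,j)\le h_j$. For $[t]^+=\max\{t,0\}$, the structure tensor is defined, for integers $0\le k_\kappa\le n_\kappa-n_{\kappa-1}$ ($\kappa=1,\dots,\nu$), by $$W_{k_1\cdots k_\nu}(\bm h,\bm r,\bm a,\bm d)=\sum_{\kappa=1}^{\nu}\sum_{j=n_{\kappa-1}+k_\kappa+1}^{n_\kappa}h_j-\sum_{i=1}^m\Big[r_i-\sum_{\kappa=a_i+1}^{d_i}k_\kappa\Big]^+.$$ *)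

From HB Require Import structures.
From mathcomp Require Import all_boot all_order all_algebra.
Set Implicit Arguments. Unset Strict Implicit. Unset Printing Implicit Defensive.
Import Order.TTheory GRing.Theory Num.Theory.

(* Conventions: slots are indexed 1..n, loads 1..m, blocks 1..nu.
   Nb : nat -> nat gives the breakpoints n_0,...,n_nu (Nb kappa = n_kappa).
   h j is the supply in slot j; r i, a i, d i the service of load i.
   A matrix A is represented as A : nat -> nat -> bool, only entries with
   1 <= i <= m and 1 <= j <= n matter. *)

Definition adequate (n m : nat) (Nb : nat -> nat) (h r a d : nat -> nat) : Prop :=
  exists A : nat -> nat -> bool,
    (forall i, 1 <= i <= m ->
       \sum_(1 <= j < n.+1) (A i j : nat) = r i /\
       (forall j, 1 <= j <= n -> ~~ (Nb (a i) + 1 <= j <= Nb (d i)) -> A i j = false)) /\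
    (forall j, 1 <= j <= n -> \sum_(1 <= i < m.+1) (A i j : nat) <= h j).

Definition pospart (t : int) : int := Num.max 0%R t.

Definition W (nu m : nat) (Nb : nat -> nat) (h r a d : nat -> nat) (k : nat -> nat) : int :=
  (\sum_(1 <= kappa < nu.+1)
      \sum_(Nb kappa.-1 + k kappa + 1 <= j < Nb kappa + 1) (h j)%:Z)%R
  - (\sum_(1 <= i < m.+1)
      pospart ((r i)%:Z - (\sum_(a i + 1 <= kappa < d i + 1) k kappa)%:Z))%R.

From HB Require Import structures.
From mathcomp Require Import all_boot all_order all_algebra.
Import Order.TTheory GRing.Theory Num.Theory.
From mathcomp Require Import zify.
From Stdlib Require Import Classical.
Set Implicit Arguments. Unset Strict Implicit. Unset Printing Implicit Defensive.

(* The proof has two layers.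
   1. A Hall/Gale-type theorem for degree-constrained assignments (section Assignment):
      loads i with demands r i, slots j with capacities h j and a relation E of allowed
      pairs.  A 0/1 assignment exists iff every set K of slots satisfies the cut
      condition: the demand that must be served outside K, sum_i [r_i - |E_i n K|]^+,
      is at most the supply sum_(j notin K) h_j outside K.  Necessity is double
      counting.  Sufficiency is by induction on the total demand: sets that are tight
      and cover a fixed load i0 are closed under intersection, which produces a slot j0
      such that serving one unit of load i0 in slot j0 preserves the cut condition.
   2. For the windows of the paper (load i may use the blocks a_i+1,...,d_i) the cut
      condition for K depends on K only through the numbers k_kappa = |K n block kappa|
      and the supply outside K.  When h is nonincreasing on each block, the supply
      outside K is smallest when K meets every block in an initial segment, and for
      those sets the outside supply minus the outside demand is exactly W_(k_1...k_nu). *)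

Lemma sum_delta (n j0 : nat) (F : nat -> nat) : 1 <= j0 <= n ->
  \sum_(1 <= j < n.+1) (j == j0) * F j = F j0.
Proof.
move=> hj0; rewrite (bigD1_seq j0) ?mem_index_iota ?iota_uniq //= eqxx mul1n.
by rewrite big1 ?addn0 // => j /negbTE ->.
Qed.

Lemma term_le_sum (m i0 : nat) (F : nat -> nat) : 1 <= i0 <= m ->
  F i0 <= \sum_(1 <= i < m.+1) F i.
Proof.
by move=> hi0; rewrite (bigD1_seq i0) ?mem_index_iota ?iota_uniq //= leq_addr.
Qed.

Lemma count_le (a b : nat) (K : nat -> bool) : \sum_(a <= j < b) (K j : nat) <= b - a.
Proof.
rewrite -[b - a]muln1 -sum_nat_const_nat; apply: leq_sum => j _; exact: leq_b1.
Qed.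

Section Assignment.
Variables n m : nat.

Definition assignable (h r : nat -> nat) (E : nat -> nat -> bool) : Prop :=
  exists A : nat -> nat -> bool,
    (forall i, 1 <= i <= m ->
       \sum_(1 <= j < n.+1) (A i j : nat) = r i /\
       (forall j, 1 <= j <= n -> A i j -> E i j)) /\
    (forall j, 1 <= j <= n -> \sum_(1 <= i < m.+1) (A i j : nat) <= h j).

Definition covered (E : nat -> nat -> bool) (K : nat -> bool) (i : nat) : nat :=
  \sum_(1 <= j < n.+1) (E i j && K j : nat).

Definition deficit (r : nat -> nat) (E : nat -> nat -> bool) (K : nat -> bool) : nat :=
  \sum_(1 <= i < m.+1) (r i - covered E K i).

Definition spare (h : nat -> nat) (K : nat -> bool) : nat :=
  \sum_(1 <= j < n.+1) ~~ K j * h j.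

Definition cut_condition (h r : nat -> nat) (E : nat -> nat -> bool) : Prop :=
  forall K, deficit r E K <= spare h K.

(* Necessity: count the units an assignment places outside K, by loads and by slots. *)
Lemma assignable_cut (h r : nat -> nat) (E : nat -> nat -> bool) :
  assignable h r E -> cut_condition h r E.
Proof.
move=> [A [hrow hcol]] K.
pose outside i j := (A i j && ~~ K j : nat).
have load_outside i : 1 <= i <= m ->
    r i - covered E K i <= \sum_(1 <= j < n.+1) outside i j.
  move=> hi; have [<- hAE] := hrow i hi.
  rewrite leq_subLR /covered -big_split /= big_nat_cond [X in _ <= X]big_nat_cond.
  apply: leq_sum => j /andP[hj _]; rewrite /outside.
  by move: (hAE j hj); case: (A i j) (K j) (E i j) => [] [] [] // ->.
have slot_outside j : 1 <= j <= n -> \sum_(1 <= i < m.+1) outside i j <= ~~ K j * h j.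
  move=> hj; rewrite /outside; case: (K j) => /=.
    by rewrite big1 // => i _; rewrite andbF.
  by rewrite mul1n (eq_bigr (fun i => A i j : nat)) ?hcol // => i _; rewrite andbT.
apply: (@leq_trans (\sum_(1 <= i < m.+1) \sum_(1 <= j < n.+1) outside i j)).
  rewrite /deficit big_nat_cond [X in _ <= X]big_nat_cond.
  by apply: leq_sum => i /andP[/load_outside].
rewrite exchange_big_nat /spare big_nat_cond [X in _ <= X]big_nat_cond.
by apply: leq_sum => j /andP[/slot_outside].
Qed.

Lemma covered_meet_join (E : nat -> nat -> bool) (K L : nat -> bool) (i : nat) :
  covered E (fun j => K j && L j) i + covered E (fun j => K j || L j) i
  = covered E K i + covered E L i.
Proof.
rewrite /covered -!big_split /=; apply: eq_bigr => j _.
by case: (E i j) (K j) (L j) => [] [] [].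
Qed.

Lemma covered_mono (E : nat -> nat -> bool) (K L : nat -> bool) (i : nat) :
  (forall j, K j -> L j) -> covered E K i <= covered E L i.
Proof.
move=> hKL; apply: leq_sum => j _.
by case: (E i j) => //=; case hK: (K j) => //=; rewrite hKL.
Qed.

Lemma spare_meet_join (h : nat -> nat) (K L : nat -> bool) :
  spare h (fun j => K j && L j) + spare h (fun j => K j || L j) = spare h K + spare h L.
Proof.
rewrite /spare -!big_split /=; apply: eq_bigr => j _.
by case: (K j) (L j) => [] []; rewrite /= ?mul1n ?mul0n ?addn0.
Qed.

Definition tight (h r : nat -> nat) (E : nat -> nat -> bool) (i0 : nat) (K : nat -> bool)
  : Prop := deficit r E K = spare h K /\ r i0 <= covered E K i0.

(* Uncrossing: the deficit is supermodular (with an extra r i0 - covered term, since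
   both sets cover i0) and the spare supply is modular, so under the cut condition the
   intersection of two tight sets covering i0 is again tight and covers i0. *)
Lemma tight_meet (h r : nat -> nat) (E : nat -> nat -> bool) (i0 : nat) (K L : nat -> bool) :
  cut_condition h r E -> 1 <= i0 <= m ->
  tight h r E i0 K -> tight h r E i0 L -> tight h r E i0 (fun j => K j && L j).
Proof.
move=> cut hi0 [eqK coverK] [eqL coverL].
set I := fun j => K j && L j; set U := fun j => K j || L j.
have supermodular : deficit r E K + deficit r E L + (r i0 - covered E I i0)
                    <= deficit r E I + deficit r E U.
  rewrite -(sum_delta (fun i => r i - covered E I i) hi0) /deficit -!big_split /=.
  apply: leq_sum => i _.
  have := covered_meet_join E K L i.
  have : covered E I i <= covered E K i by apply: covered_mono => j /andP[].
  have : covered E I i <= covered E L i by apply: covered_mono => j /andP[].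
  by case: (eqVneq i i0) => [->|_] /=; rewrite -/I -/U ?mul1n ?mul0n; lia.
have := spare_meet_join h K L; have := cut I; have := cut U.
by rewrite -/I -/U; split; lia.
Qed.

Definition support_size (K : nat -> bool) : nat := \sum_(1 <= j < n.+1) (K j : nat).

Lemma support_meet_lt (K L : nat -> bool) (j : nat) : 1 <= j <= n -> K j -> ~~ L j ->
  support_size (fun i => K i && L i) < support_size K.
Proof.
move=> hj hKj hLj.
rewrite -addn1 -(sum_delta (fun _ => 1) hj) /support_size -big_split /=.
apply: leq_sum => i _; case: (eqVneq i j) => [->|_]; first by rewrite (negbTE hLj) hKj.
by rewrite muln1 addn0; case: (K i) (L i) => [] [].
Qed.

(* Nothing is spare outside the set of all slots, so every load is covered by it. *)
Lemma full_tight (h r : nat -> nat) (E : nat -> nat -> bool) (i0 : nat) :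
  cut_condition h r E -> 1 <= i0 <= m -> tight h r E i0 (fun _ => true).
Proof.
move=> cut hi0.
have spare0 : spare h (fun _ => true) = 0 by rewrite /spare big1.
have := cut (fun _ => true); rewrite spare0 leqn0 => /eqP deficit0.
split; first by rewrite deficit0 spare0.
have := term_le_sum (fun i => r i - covered E (fun _ => true) i) hi0.
by rewrite -/(deficit r E (fun _ => true)) deficit0; lia.
Qed.

(* A tight set covering i0 contains an allowed slot of i0 with positive supply:
   otherwise removing the allowed slots of i0 from K would raise the deficit by
   r i0 > 0 without changing the spare supply. *)
Lemma tight_candidate (h r : nat -> nat) (E : nat -> nat -> bool) (i0 : nat) (K : nat -> bool) :
  cut_condition h r E -> 1 <= i0 <= m -> 0 < r i0 ->
  tight h r E i0 K -> exists j, [/\ 1 <= j <= n, K j, E i0 j & 0 < h j].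
Proof.
move=> cut hi0 hr [eqK coverK]; apply: NNPP => none.
pose K_off j := K j && ~~ E i0 j.
have spare_off : spare h K_off = spare h K.
  rewrite /spare big_nat_cond [RHS]big_nat_cond; apply: eq_bigr => j /andP[hj _].
  rewrite /K_off; case hKj: (K j); case hEj: (E i0 j) => //=.
  by case: (posnP (h j)) => [->|hpos]; [rewrite muln0 | case: none; exists j].
have deficit_off : deficit r E K + r i0 <= deficit r E K_off.
  rewrite -(sum_delta (fun _ => r i0) hi0) /deficit -big_split /=.
  apply: leq_sum => i _; case: (eqVneq i i0) => [->|_] /=.
    have -> : covered E K_off i0 = 0.
      by rewrite /covered big1 // => j _; rewrite /K_off; case: (E i0 j); rewrite ?andbF.
    by move: coverK; lia.
  by rewrite mul0n addn0 leq_sub2l //; apply: covered_mono => j /andP[].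
by have := cut K_off; lia.
Qed.

(* Otherwise every such slot is
   avoided by a tight set, and intersecting with these sets would shrink the tight set
   of all slots forever (tight_candidate, tight_meet). *)
Lemma safe_slot (h r : nat -> nat) (E : nat -> nat -> bool) (i0 : nat) :
  cut_condition h r E -> 1 <= i0 <= m -> 0 < r i0 ->
  exists j0, [/\ 1 <= j0 <= n, E i0 j0, 0 < h j0 &
    forall K, ~~ K j0 -> r i0 <= covered E K i0 -> deficit r E K < spare h K].
Proof.
move=> cut hi0 hr; apply: NNPP => no_safe.
have avoided j : 1 <= j <= n -> E i0 j -> 0 < h j -> exists L, ~~ L j /\ tight h r E i0 L.
  move=> hj hE hh; apply: NNPP => none; apply: no_safe; exists j; split => // K hK coverK.
  by rewrite ltn_neqAle cut andbT; apply/eqP => eqK; apply: none; exists K.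
suff no_tight c K : support_size K < c -> ~ tight h r E i0 K.
  exact: (no_tight _ _ (ltnSn _) (full_tight cut hi0)).
elim: c K => [|c IH] K // sizeK tK.
have [j [hj hKj hE hh]] := tight_candidate cut hi0 hr tK.
have [L [hLj tL]] := avoided j hj hE hh.
apply: (IH (fun j => K j && L j)); last exact: tight_meet.
exact: leq_trans (support_meet_lt hj hKj hLj) sizeK.
Qed.

Definition reduce_supply (h : nat -> nat) (j0 : nat) : nat -> nat :=
  fun j => h j - (j == j0).
Definition reduce_demand (r : nat -> nat) (i0 : nat) : nat -> nat :=
  fun i => r i - (i == i0).
Definition remove_pair (E : nat -> nat -> bool) (i0 j0 : nat) : nat -> nat -> bool :=
  fun i j => E i j && ~~ ((i == i0) && (j == j0)).

Lemma covered_remove_pair (E : nat -> nat -> bool) (i0 j0 : nat) (K : nat -> bool) (i : nat) :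
  1 <= j0 <= n -> E i0 j0 ->
  covered E K i = covered (remove_pair E i0 j0) K i + ((i == i0) && K j0).
Proof.
move=> hj0 hE.
rewrite /covered -(sum_delta (fun j => ((i == i0) && K j : nat)) hj0) -big_split /=.
apply: eq_bigr => j _; rewrite /remove_pair.
by case: (eqVneq i i0) => [->|_]; case: (eqVneq j j0) => [->|_] /=;
  rewrite ?hE ?muln0 ?mul0n ?mul1n ?addn0 ?andbT.
Qed.

Lemma spare_reduce_supply (h : nat -> nat) (j0 : nat) (K : nat -> bool) :
  1 <= j0 <= n -> 0 < h j0 -> spare h K = spare (reduce_supply h j0) K + ~~ K j0.
Proof.
move=> hj0 hh.
rewrite /spare -(sum_delta (fun j => (~~ K j : nat)) hj0) -big_split /=.
apply: eq_bigr => j _; rewrite /reduce_supply.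
by case: (eqVneq j j0) => [->|_]; case: (K _); rewrite /= ?mul1n ?mul0n ?muln1 ?muln0; lia.
Qed.

(* Serving one unit of i0 in a safe slot j0 keeps the cut condition: for K containing
   j0 both sides are unchanged; for K avoiding j0 the spare supply drops by one, which
   is paid for either by strictness (safe slot) or by a drop of the deficit of i0. *)
Lemma cut_after_assign (h r : nat -> nat) (E : nat -> nat -> bool) (i0 j0 : nat) :
  cut_condition h r E -> 1 <= i0 <= m -> 0 < r i0 -> 1 <= j0 <= n -> E i0 j0 -> 0 < h j0 ->
  (forall K, ~~ K j0 -> r i0 <= covered E K i0 -> deficit r E K < spare h K) ->
  cut_condition (reduce_supply h j0) (reduce_demand r i0) (remove_pair E i0 j0).
Proof.
move=> cut hi0 hr hj0 hE hh safe K.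
have hcov i := covered_remove_pair K i hj0 hE.
have hspare := spare_reduce_supply K hj0 hh.
have cutK := cut K.
case hKj0: (K j0); rewrite hKj0 /= in hspare.
  have -> : deficit (reduce_demand r i0) (remove_pair E i0 j0) K = deficit r E K.
    apply: eq_bigr => i _; rewrite hcov hKj0 andbT /reduce_demand.
    by case: (i == i0) => /=; lia.
  by rewrite addn0 in hspare; rewrite -hspare.
have hcov' i : covered E K i = covered (remove_pair E i0 j0) K i.
  by rewrite hcov hKj0 andbF addn0.
have shrink : deficit (reduce_demand r i0) (remove_pair E i0 j0) K + (covered E K i0 < r i0)
              <= deficit r E K.
  rewrite -(sum_delta (fun _ => (covered E K i0 < r i0 : nat)) hi0) /deficit -big_split /=.
  apply: leq_sum => i _; rewrite -hcov' /reduce_demand.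
  by case: (eqVneq i i0) => [->|_]; rewrite /= ?mul1n ?mul0n; lia.
case: (leqP (r i0) (covered E K i0)) => cover_i0 /=; last lia.
by have := safe K (negbT hKj0) cover_i0; lia.
Qed.

Lemma assign_extend (h r : nat -> nat) (E : nat -> nat -> bool) (i0 j0 : nat) :
  1 <= i0 <= m -> 0 < r i0 -> 1 <= j0 <= n -> 0 < h j0 -> E i0 j0 ->
  assignable (reduce_supply h j0) (reduce_demand r i0) (remove_pair E i0 j0) ->
  assignable h r E.
Proof.
move=> hi0 hr hj0 hh hE [A [hrow hcol]].
have A_i0j0 : A i0 j0 = false.
  by apply/negP => hA; have := (hrow i0 hi0).2 j0 hj0 hA; rewrite /remove_pair !eqxx andbF.
pose A1 i j := A i j || (i == i0) && (j == j0).
have A1E i j : (A1 i j : nat) = A i j + (j == j0) * (i == i0).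
  rewrite /A1; case: (eqVneq i i0) => [->|_]; case: (eqVneq j j0) => [->|_];
  by rewrite ?A_i0j0 ?orbF ?orbT ?addn0.
exists A1; split => [i hi | j hj].
  have [hsum hA] := hrow i hi; split.
    rewrite (eq_bigr _ (fun j _ => A1E i j)) big_split /= sum_delta // hsum.
    by rewrite /reduce_demand; case: (eqVneq i i0) => [->|_] /=; lia.
  move=> j hj /orP[hAij|/andP[/eqP -> /eqP ->]] //.
  by have := hA j hj hAij; rewrite /remove_pair => /andP[].
rewrite (eq_bigr (fun i => A i j + (i == i0) * (j == j0))) => [|i _]; last first.
  by rewrite A1E mulnC.
rewrite big_split /= sum_delta //.
by have := hcol j hj; rewrite /reduce_supply; case: (eqVneq j j0) => [->|_] /=; lia.
Qed.

Lemma cut_assignable (h r : nat -> nat) (E : nat -> nat -> bool) :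
  cut_condition h r E -> assignable h r E.
Proof.
move hN : (\sum_(1 <= i < m.+1) r i) => N.
elim: N h r E hN => [|N IH] h r E hN cut.
  exists (fun _ _ => false); split => [i hi | j _]; last by rewrite big1.
  split=> //; rewrite big1 //.
  by have := term_le_sum r hi; rewrite hN; lia.
have [i0 hi0 hr0] : exists2 i0, 1 <= i0 <= m & 0 < r i0.
  apply: NNPP => none; suff : \sum_(1 <= i < m.+1) r i = 0 by rewrite hN.
  rewrite big_nat_cond big1 // => i /andP[hi _].
  by apply/eqP; rewrite -leqn0 leqNgt; apply/negP => hpos; apply: none; exists i.
have [j0 [hj0 hE hh safe]] := safe_slot cut hi0 hr0.
apply: (assign_extend hi0 hr0 hj0 hh hE); apply: IH; last exact: cut_after_assign.
have split_r : \sum_(1 <= i < m.+1) r i =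
    \sum_(1 <= i < m.+1) (reduce_demand r i0 i + (i == i0) * 1).
  by apply: eq_bigr => i _; rewrite /reduce_demand; case: (eqVneq i i0) => [->|_] /=; lia.
by move: hN; rewrite split_r big_split /= sum_delta // addn1 => -[].
Qed.

Lemma assignable_iff_cut (h r : nat -> nat) (E : nat -> nat -> bool) :
  assignable h r E <-> cut_condition h r E.
Proof. by split; [exact: assignable_cut | exact: cut_assignable]. Qed.

End Assignment.

(* Exchange argument on one block (s, t] where f is nonincreasing: the supply outside
   K is at least the supply outside the initial segment of (s, t] with as many slots
   as K has there. *)
Lemma prefix_minimizes (s t : nat) (f : nat -> nat) (K : nat -> bool) :
  (forall i j, s < i -> i < j -> j <= t -> f j <= f i) ->
  \sum_(s + \sum_(s + 1 <= j < t + 1) (K j : nat) + 1 <= j < t + 1) f j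
    <= \sum_(s + 1 <= j < t + 1) ~~ K j * f j.
Proof.
elim: t => [|t IH] f_noninc; first by rewrite !big_geq //; lia.
have [le_ts|lt_st] := leqP t.+1 s; first by rewrite !big_geq //; lia.
have IHt := IH (fun i j hi hij hj => f_noninc i j hi hij (leqW hj)).
set c := \sum_(s + 1 <= j < t + 1) (K j : nat) in IHt *.
have c_le : c <= t - s by apply: leq_trans (count_le _ _ _) _; lia.
rewrite (_ : t.+1 + 1 = (t + 1).+1) ?addSn //.
have count_step : \sum_(s + 1 <= j < (t + 1).+1) (K j : nat) = c + K (t + 1).
  by rewrite big_nat_recr //; lia.
have spare_step : \sum_(s + 1 <= j < (t + 1).+1) ~~ K j * f j =
    \sum_(s + 1 <= j < t + 1) ~~ K j * f j + ~~ K (t + 1) * f (t + 1).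
  by rewrite big_nat_recr //; lia.
rewrite count_step spare_step; case: (K (t + 1)) => /=; last first.
  by rewrite addn0 mul1n big_nat_recr /= ?leq_add2r //; lia.
rewrite mul0n !addn0; apply: leq_trans IHt.
have [->|c_lt] := eqVneq c (t - s); first by rewrite big_geq //; lia.
rewrite (@big_ltn _ _ _ (s + c + 1)); last lia.
rewrite big_nat_recr /=; last lia.
rewrite addnC (_ : s + (c + 1) + 1 = (s + c + 1).+1); last lia.
by rewrite leq_add2r; apply: f_noninc; lia.
Qed.

Lemma prefix_counts (s q t : nat) (f : nat -> nat) (K : nat -> bool) : s + q <= t ->
  (forall j, s < j <= t -> K j = (j <= s + q)) ->
  \sum_(s + 1 <= j < t + 1) (K j : nat) = q /\
  \sum_(s + 1 <= j < t + 1) ~~ K j * f j = \sum_(s + q + 1 <= j < t + 1) f j.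
Proof.
move=> le_t K_prefix.
have -> : \sum_(s + 1 <= j < t + 1) (K j : nat) = \sum_(s + 1 <= j < t + 1) (j <= s + q : nat).
  by apply: eq_big_nat => j hj; rewrite K_prefix //; lia.
have -> : \sum_(s + 1 <= j < t + 1) ~~ K j * f j =
          \sum_(s + 1 <= j < t + 1) ~~ (j <= s + q) * f j.
  by apply: eq_big_nat => j hj; rewrite K_prefix //; lia.
rewrite !(big_cat_nat (n := s + q + 1) (m := s + 1) (p := t + 1)) /=; try lia.
have [low high] : (forall j, s + 1 <= j < s + q + 1 -> j <= s + q) /\
                  (forall j, s + q + 1 <= j < t + 1 -> (j <= s + q) = false).
  by split=> j hj; lia.
split.
  transitivity (\sum_(s + 1 <= j < s + q + 1) 1 + \sum_(s + q + 1 <= j < t + 1) 0).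
    by congr (_ + _); apply: eq_big_nat => j; [move/low -> | move/high ->].
  by rewrite sum_nat_const_nat big1 //; lia.
rewrite big_nat_cond big1 ?add0n => [|j /andP[/low -> _]] //.
by apply: eq_big_nat => j /high ->; rewrite mul1n.
Qed.

Lemma sum_window (n lo hi : nat) (F : nat -> nat) : 1 <= lo -> hi <= n -> lo <= hi + 1 ->
  \sum_(1 <= j < n.+1) (lo <= j <= hi) * F j = \sum_(lo <= j < hi + 1) F j.
Proof.
move=> lo_pos hi_le lo_le.
rewrite (big_cat_nat (n := lo)) /=; [|lia|lia].
rewrite [X in _ + X](big_cat_nat (n := hi.+1)) /=; [|lia|lia].
have outside a b : (b <= lo) || (hi.+1 <= a) ->
    \sum_(a <= j < b) (lo <= j <= hi) * F j = 0.
  move=> hab; rewrite big_nat_cond big1 // => j /andP[hj _].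
  by rewrite (_ : lo <= j <= hi = false) //; lia.
rewrite (outside 1 lo) ?leqnn // (outside hi.+1 n.+1) ?leqnn ?orbT // add0n addn0 -addn1.
by apply: eq_big_nat => j hj; rewrite (_ : lo <= j <= hi) ?mul1n //; lia.
Qed.

Section Blocks.
(* Breakpoints Nb 0 < Nb 1 < ... < Nb nu; block kappa is (Nb kappa.-1, Nb kappa]. *)
Variables (nu : nat) (Nb : nat -> nat).
Hypothesis Nb_incr : forall kappa, kappa < nu -> Nb kappa < Nb kappa.+1.

Lemma Nb_ltn (p q : nat) : p < q <= nu -> Nb p < Nb q.
Proof.
case/andP=> lt_pq le_qnu.
apply: (homo_ltn_in (D := [pred i | i <= nu]) (f := Nb) (r := fun x y => x < y)) => //.
- exact: ltn_trans.
- by move=> i j hi hj k; rewrite !inE in hi hj *; lia.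
- by move=> i _; rewrite inE; apply: Nb_incr.
- by rewrite inE; lia.
Qed.

Lemma Nb_leq (p q : nat) : p <= q <= nu -> Nb p <= Nb q.
Proof.
case/andP; rewrite leq_eqVlt => /predU1P[-> // | lt_pq] le_qnu.
by rewrite ltnW // Nb_ltn ?lt_pq.
Qed.

Lemma sum_blocks (F : nat -> nat) (s t : nat) : s <= t <= nu ->
  \sum_(s + 1 <= kappa < t + 1) \sum_(Nb kappa.-1 + 1 <= j < Nb kappa + 1) F j
  = \sum_(Nb s + 1 <= j < Nb t + 1) F j.
Proof.
elim: t => [|t IH] /andP[le_st le_tnu]; first by rewrite (_ : s = 0) ?big_geq //; lia.
have [->|ne_st] := eqVneq s t.+1; first by rewrite !big_geq.
rewrite (_ : t.+1 + 1 = (t + 1).+1) ?addSn // big_nat_recr /=; last lia.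
rewrite IH; last lia.
rewrite (_ : t + 1 = t.+1) ?addn1 // -big_cat_nat // ltnS.
- by rewrite Nb_leq //; lia.
- by rewrite ltnW // Nb_incr.
Qed.

Definition prefix_set (k : nat -> nat) (j : nat) : bool :=
  has (fun kappa => Nb kappa.-1 < j <= Nb kappa.-1 + k kappa) (iota 1 nu).

Lemma prefix_set_block (k : nat -> nat) :
  (forall kappa, 1 <= kappa <= nu -> k kappa <= Nb kappa - Nb kappa.-1) ->
  forall kappa j, 1 <= kappa <= nu -> Nb kappa.-1 < j <= Nb kappa ->
  prefix_set k j = (j <= Nb kappa.-1 + k kappa).
Proof.
move=> k_le kappa j hkappa hj.
apply/hasP/idP => [[kappa' ] | in_prefix]; last first.
  by exists kappa; [rewrite mem_iota; lia | rewrite in_prefix andbT; case/andP: hj].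
rewrite mem_iota => hkappa' /andP[lo' hi'].
have := k_le kappa' ltac:(lia); have := Nb_leq (p := kappa'.-1) (q := kappa') ltac:(lia).
case: (ltngtP kappa' kappa) => [lt_k | lt_k | <- _ _ //].
- by have := Nb_leq (p := kappa') (q := kappa.-1) ltac:(lia); lia.
- by have := Nb_leq (p := kappa) (q := kappa'.-1) ltac:(lia); lia.
Qed.

End Blocks.

Lemma pospart_nat (x y : nat) : pospart (x%:Z - y%:Z)%R = (x - y)%N%:Z%R.
Proof.
rewrite /pospart; case: (leqP y x) => le_yx; first by rewrite subzn // max_r.
have -> : (x - y)%N = 0 by apply/eqP; rewrite subn_eq0 ltnW.
by rewrite max_l // subr_le0 lez_nat ltnW.
Qed.

Lemma Posz_sum (s : seq nat) (F : nat -> nat) :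
  ((\sum_(i <- s) F i)%N%:Z = \sum_(i <- s) (F i)%:Z)%R.
Proof. exact: (big_morph Posz PoszD (erefl _)). Qed.

Lemma W_nat (nu m : nat) (Nb h r a d k : nat -> nat) :
  W nu m Nb h r a d k =
  ((\sum_(1 <= kappa < nu.+1) \sum_(Nb kappa.-1 + k kappa + 1 <= j < Nb kappa + 1) h j)%N%:Z
   - (\sum_(1 <= i < m.+1) (r i - \sum_(a i + 1 <= kappa < d i + 1) k kappa))%N%:Z)%R.
Proof.
rewrite /W Posz_sum; congr (_ - _)%R.
  by apply: eq_bigr => kappa _; rewrite Posz_sum.
by rewrite Posz_sum; apply: eq_bigr => i _; rewrite pospart_nat.
Qed.

Section Schedule.
Variables (n nu m : nat) (Nb r a d h : nat -> nat).
Hypothesis Nb0 : Nb 0 = 0.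
Hypothesis Nb_incr : forall kappa, kappa < nu -> Nb kappa < Nb kappa.+1.
Hypothesis Nb_nu : Nb nu = n.
Hypothesis loads_in_horizon : forall i, 1 <= i <= m -> a i < d i <= nu.
Hypothesis h_noninc : forall kappa, 1 <= kappa <= nu ->
  forall i j, Nb kappa.-1 + 1 <= i -> i < j -> j <= Nb kappa -> h j <= h i.

Definition window (i j : nat) : bool := Nb (a i) + 1 <= j <= Nb (d i).

Definition block_count (K : nat -> bool) (kappa : nat) : nat :=
  \sum_(Nb kappa.-1 + 1 <= j < Nb kappa + 1) (K j : nat).

Lemma adequate_assignable : adequate n m Nb h r a d <-> assignable n m h r window.
Proof.
split=> -[A [rows cols]]; exists A; split=> // i hi; have [sum_i in_i] := rows i hi.
  by split=> // j hj; apply: contraLR => out; rewrite in_i.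
by split=> // j hj out; apply/negbTE; apply: contra out; exact: in_i.
Qed.

Lemma covered_window (K : nat -> bool) (i : nat) : 1 <= i <= m ->
  covered n window K i = \sum_(a i + 1 <= kappa < d i + 1) block_count K kappa.
Proof.
move=> hi; have /andP[lt_ad le_dnu] := loads_in_horizon hi.
have le_Nbd : Nb (d i) <= n by rewrite -Nb_nu (Nb_leq Nb_incr) // le_dnu leqnn.
have le_Nbad : Nb (a i) <= Nb (d i) by rewrite (Nb_leq Nb_incr) // ltnW.
rewrite /covered (eq_bigr (fun j => window i j * K j)) => [|j _]; last by rewrite mulnb.
rewrite sum_window ?leq_add2r ?addn_gt0 ?orbT //.
by rewrite /block_count (sum_blocks Nb_incr) // ltnW ?lt_ad.
Qed.

Lemma spare_blocks (K : nat -> bool) :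
  spare n h K =
  \sum_(1 <= kappa < nu.+1) \sum_(Nb kappa.-1 + 1 <= j < Nb kappa + 1) ~~ K j * h j.
Proof.
have := sum_blocks Nb_incr (fun j => ~~ K j * h j) (s := 0) (t := nu) (leqnn nu).
by rewrite Nb0 Nb_nu [nu + 1]addn1 [n + 1]addn1.
Qed.

(* The cut condition for the prefix set of k is exactly W_k >= 0. *)
Lemma W_nonneg_of_cut : cut_condition n m h r window ->
  forall k, (forall kappa, 1 <= kappa <= nu -> k kappa <= Nb kappa - Nb kappa.-1) ->
  (0 <= W nu m Nb h r a d k)%R.
Proof.
move=> cut k k_le; rewrite W_nat subr_ge0 lez_nat.
pose K := prefix_set nu Nb k.
have block kappa : 1 <= kappa <= nu ->
    block_count K kappa = k kappa /\
    \sum_(Nb kappa.-1 + 1 <= j < Nb kappa + 1) ~~ K j * h j =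
    \sum_(Nb kappa.-1 + k kappa + 1 <= j < Nb kappa + 1) h j.
  move=> hkappa; apply: prefix_counts; last by move=> j hj; apply: prefix_set_block.
  have := k_le kappa hkappa; have := Nb_ltn Nb_incr (p := kappa.-1) (q := kappa) ltac:(lia).
  lia.
have deficitK : deficit n m r window K =
    \sum_(1 <= i < m.+1) (r i - \sum_(a i + 1 <= kappa < d i + 1) k kappa).
  apply: eq_big_nat => i hi; rewrite covered_window //; congr (_ - _).
  have /andP[_ le_dnu] := loads_in_horizon hi.
  by apply: eq_big_nat => kappa hkappa; rewrite (block kappa _).1 //; lia.
have spareK : spare n h K =
    \sum_(1 <= kappa < nu.+1) \sum_(Nb kappa.-1 + k kappa + 1 <= j < Nb kappa + 1) h j.
  by rewrite spare_blocks; apply: eq_big_nat => kappa hkappa; rewrite (block kappa hkappa).2.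
by rewrite -deficitK -spareK.
Qed.

(* For an arbitrary K, apply W >= 0 to the block counts of K and compare the outside
   supply of K block by block with that of the prefix set (prefix_minimizes). *)
Lemma cut_of_W_nonneg :
  (forall k, (forall kappa, 1 <= kappa <= nu -> k kappa <= Nb kappa - Nb kappa.-1) ->
     (0 <= W nu m Nb h r a d k)%R) ->
  cut_condition n m h r window.
Proof.
move=> W_ge0 K.
have k_le kappa : 1 <= kappa <= nu -> block_count K kappa <= Nb kappa - Nb kappa.-1.
  by move=> _; apply: leq_trans (count_le _ _ _) _; lia.
have := W_ge0 (block_count K) k_le; rewrite W_nat subr_ge0 lez_nat => W_ineq.
have -> : deficit n m r window K =
    \sum_(1 <= i < m.+1) (r i - \sum_(a i + 1 <= kappa < d i + 1) block_count K kappa).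
  by apply: eq_big_nat => i hi; rewrite covered_window.
rewrite spare_blocks; apply: leq_trans W_ineq _.
rewrite big_nat_cond [X in _ <= X]big_nat_cond; apply: leq_sum => kappa /andP[hkappa _].
by apply: prefix_minimizes => i j hi hij hj; apply: (h_noninc hkappa); rewrite ?addn1.
Qed.

End Schedule.

Theorem theorem1 (n nu : nat) (Nb : nat -> nat) (m : nat) (r a d h : nat -> nat) :
  1 <= nu <= n ->
  Nb 0 = 0 ->
  (forall kappa, kappa < nu -> Nb kappa < Nb kappa.+1) ->
  Nb nu = n ->
  1 <= m ->
  (forall i, 1 <= i <= m ->
     [/\ a i < d i, d i <= nu, 0 < r i & r i <= Nb (d i) - Nb (a i)]) ->
  (forall kappa, 1 <= kappa <= nu ->
     forall i j, Nb kappa.-1 + 1 <= i -> i < j -> j <= Nb kappa -> h j <= h i) ->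
  (adequate n m Nb h r a d <->
   forall k : nat -> nat,
     (forall kappa, 1 <= kappa <= nu -> k kappa <= Nb kappa - Nb kappa.-1) ->
     (0 <= W nu m Nb h r a d k)%R).
Proof.
move=> _ Nb0 Nb_incr Nb_nu _ loads h_noninc.
have horizon i : 1 <= i <= m -> a i < d i <= nu by move=> /loads[-> ->].
rewrite adequate_assignable assignable_iff_cut; split.
  exact: (W_nonneg_of_cut Nb0 Nb_incr Nb_nu horizon).
exact: (cut_of_W_nonneg Nb0 Nb_incr Nb_nu horizon h_noninc).
Qed.
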